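(* On every interface element $T$ on which the IFE shape functions are unisolvent, for all $X\in T$, all choices $\overline X_i\in l$, $s=\pm$ ($s'$ opposite), and $j,k=1,2$: $$\sum_{i\in\mathcal I}(A_i-X)^T\otimes\Phi^s_i(X)+\sum_{i\in\mathcal I^{s'}}\big((A_i-\overline X_i)^T\otimes\Phi^s_i(X)\big)(\overline M^s-I_4)=0_{2\times4},$$ $$\sum_{i\in\mathcal I}(A_i-X)^T\otimes\partial_{x_j}\Phi^s_i(X)+\sum_{i\in\mathcal I^{s'}}\big((A_i-\overline X_i)^T\otimes\partial_{x_j}\Phi^s_i(X)\big)(\overline M^s-I_4)=I^j,$$ $$\sum_{i\in\mathcal I}(A_i-X)^T\otimes\partial_{x_jx_k}\Phi^s_i(X)+\sum_{i\in\mathcal I^{s'}}\big((A_i-\overline X_i)^T\otimes\partial_{x_jx_k}\Phi^s_i(X)\big)(\overline M^s-I_4)=0_{2\times4},$$ where $I^1=[I_2,0_{2\times2}]$ and $I^2=[0_{2\times2},I_2]$.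
   Context: Lamé parameters $\lambda^\pm,\mu^\pm>0$; stress $\sigma^s(\mathbf v)=\lambda^s(\nabla\cdot\mathbf v)I+2\mu^s\epsilon(\mathbf v)$. $T$ is a triangle with $\Pi_T=[\mathrm{span}\{1,x,y\}]^2$ and nodes its vertices, or a square with $\Pi_T=[\mathrm{span}\{1,x,y,xy\}]^2$ and nodes its vertices, or a square with $\Pi_T=[\mathrm{span}\{1,x,y,x^2-y^2\}]^2$ and nodes its edge midpoints; $\mathcal I$ the node index set. $\Gamma$ meets $\partial T$ at $D,E$; $l$ is the line through them with unit normal $\bar{\mathbf n}=(\bar n_1,\bar n_2)$; $l$ splits $T$ into $\overline T^\pm$; $\mathcal I^s=\{i:A_i\in T\cap\Omega^s\}$. IFE shape functions $\boldsymbol\phi_{i,T}$ ($1\le i\le2|\mathcal I|$) are the piecewise functions $\boldsymbol\phi^s\in\Pi_T$ on $\overline T^s$, continuous across $l$, with (square cases) equal coefficient vectors of $xy$ (resp. $x^2-y^2$), satisfying $\sigma^+(\boldsymbol\phi^+)(F)\bar{\mathbf n}=\sigma^-(\boldsymbol\phi^-)(F)\bar{\mathbf n}$ at a fixed $F\in l$, with $\boldsymbol\phi_{i,T}(A_j)=(\delta_{ij},0)^T$ ($i\le|\mathcal I|$), $(0,\delta_{i-|\mathcal I|,j})^T$ ($i>|\mathcal I|$); unisolvent means nodal values determine IFE functions uniquely. $\Phi_{i,T}=[\boldsymbol\phi_{i,T},\boldsymbol\phi_{i+|\mathcal I|,T}]$, and $\Phi^s_i$ is the $2\times2$ matrix polynomial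 equal to $\Phi_{i,T}$ on $\overline T^s$. $\overline N^s$ is the $4\times4$ matrix with rows $((\lambda^s+2\mu^s)\bar n_1,\mu^s\bar n_2,\mu^s\bar n_2,\lambda^s\bar n_1)$, $(\lambda^s\bar n_2,\mu^s\bar n_1,\mu^s\bar n_1,(\lambda^s+2\mu^s)\bar n_2)$, $(-\bar n_2,0,\bar n_1,0)$, $(0,-\bar n_2,0,\bar n_1)$; $\overline M^-=(\overline N^+)^{-1}\overline N^-$, $\overline M^+=(\overline N^-)^{-1}\overline N^+$. $\otimes$ is the Kronecker product. *)

(* the statement is purely algebraic (polynomials of degree <= 2
   in two variables, formal partial derivatives), stated over any realFieldType. *)
From HB Require Import structures.
From mathcomp Require Import all_boot all_order all_algebra.
Set Implicit Arguments. Unset Strict Implicit. Unset Printing Implicit Defensive.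
Import Order.TTheory GRing.Theory Num.Theory.
Local Open Scope ring_scope.

Section IFE.
Variable R : realFieldType.

Definition pt := (R * R)%type.

Record bpoly := BPoly { c0 : R; cx : R; cy : R; cxx : R; cxy : R; cyy : R }.

Definition bev (p : bpoly) (X : pt) : R :=
  c0 p + cx p * X.1 + cy p * X.2 + cxx p * X.1 ^+ 2 + cxy p * X.1 * X.2
  + cyy p * X.2 ^+ 2.

Definition bdx (p : bpoly) : bpoly := BPoly (cx p) (2%:R * cxx p) (cxy p) 0 0 0.
Definition bdy (p : bpoly) : bpoly := BPoly (cy p) (cxy p) (2%:R * cyy p) 0 0 0.
Definition bd (j : 'I_2) (p : bpoly) : bpoly := if val j == 0%N then bdx p else bdy p.

Definition vpoly := (bpoly * bpoly)%type.
Definition vcomp (u : vpoly) (r : 'I_2) : bpoly := if val r == 0%N then u.1 else u.2.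
Definition pcomp (X : pt) (r : 'I_2) : R := if val r == 0%N then X.1 else X.2.
Definition vev (u : vpoly) (X : pt) : pt := (bev u.1 X, bev u.2 X).

(* ETri P1 P2 P3 : triangle, P1 = [span{1,x,y}]^2, nodes = vertices.
   ESqBil a b h : square [a,a+h]x[b,b+h], P1 = [span{1,x,y,xy}]^2, nodes = vertices.
   ESqRot a b h : same square, P1 = [span{1,x,y,x^2-y^2}]^2, nodes = edge midpoints. *)
Inductive element :=
| ETri of pt & pt & pt
| ESqBil of R & R & R
| ESqRot of R & R & R.

Definition nnodes (e : element) : nat :=
  match e with ETri _ _ _ => 3 | _ => 4 end.

Definition sq_vertices (a b h : R) : 4.-tuple pt :=
  [tuple (a, b); (a + h, b); (a + h, b + h); (a, b + h)].
Definition sq_midpoints (a b h : R) : 4.-tuple pt :=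
  [tuple (a + h / 2%:R, b); (a + h, b + h / 2%:R); (a + h / 2%:R, b + h);
         (a, b + h / 2%:R)].

Definition nodes (e : element) : 'I_(nnodes e) -> pt :=
  match e return 'I_(nnodes e) -> pt with
  | ETri P1 P2 P3 => fun i => tnth [tuple P1; P2; P3] i
  | ESqBil a b h => fun i => tnth (sq_vertices a b h) i
  | ESqRot a b h => fun i => tnth (sq_midpoints a b h) i
  end.
Arguments nodes : clear implicits.

Definition cross (P Q S : pt) : R :=
  (Q.1 - P.1) * (S.2 - P.2) - (Q.2 - P.2) * (S.1 - P.1).

Definition valid_element (e : element) : Prop :=
  match e with
  | ETri P1 P2 P3 => cross P1 P2 P3 != 0
  | ESqBil _ _ h | ESqRot _ _ h => 0 < h
  end.

Definition on_seg (P Q X : pt) : Prop :=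
  exists t : R, 0 <= t <= 1 /\ X = (P.1 + t * (Q.1 - P.1), P.2 + t * (Q.2 - P.2)).

Definition in_sq (a b h : R) (X : pt) : Prop :=
  a <= X.1 <= a + h /\ b <= X.2 <= b + h.

Definition inT (e : element) (X : pt) : Prop :=
  match e with
  | ETri P1 P2 P3 => exists t1 t2 t3 : R,
      [/\ 0 <= t1, 0 <= t2, 0 <= t3, t1 + t2 + t3 = 1 &
          X = (t1 * P1.1 + t2 * P2.1 + t3 * P3.1, t1 * P1.2 + t2 * P2.2 + t3 * P3.2)]
  | ESqBil a b h | ESqRot a b h => in_sq a b h X
  end.

Definition onBdT (e : element) (X : pt) : Prop :=
  match e with
  | ETri P1 P2 P3 => on_seg P1 P2 X \/ on_seg P2 P3 X \/ on_seg P3 P1 X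
  | ESqBil a b h | ESqRot a b h =>
      in_sq a b h X /\ (X.1 = a \/ X.1 = a + h \/ X.2 = b \/ X.2 = b + h)
  end.

Definition inPi (e : element) (p : bpoly) : Prop :=
  match e with
  | ETri _ _ _ => [/\ cxx p = 0, cxy p = 0 & cyy p = 0]
  | ESqBil _ _ _ => cxx p = 0 /\ cyy p = 0
  | ESqRot _ _ _ => cxy p = 0 /\ cyy p = - cxx p
  end.

Definition top_coef_eq (e : element) (u v : vpoly) : Prop :=
  match e with
  | ETri _ _ _ => True
  | ESqBil _ _ _ => cxy u.1 = cxy v.1 /\ cxy u.2 = cxy v.2
  | ESqRot _ _ _ => cxx u.1 = cxx v.1 /\ cxx u.2 = cxx v.2
  end.

(* signed position of X with respect to the line l through D with normal nb;
   T^+ = {side >= 0}, T^- = {side < 0} (points of l are given to T^+; the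
   IFE function is continuous across l so this is immaterial). *)
Definition side (D nb X : pt) : R := (X.1 - D.1) * nb.1 + (X.2 - D.2) * nb.2.
Definition onside (D nb : pt) (s : bool) (X : pt) : bool :=
  if s then 0 <= side D nb X else side D nb X < 0.

Definition traction (lam mu : R) (u : vpoly) (X nb : pt) : pt :=
  let u1x := bev (bdx u.1) X in let u1y := bev (bdy u.1) X in
  let u2x := bev (bdx u.2) X in let u2y := bev (bdy u.2) X in
  let dv := u1x + u2y in
  let s11 := lam * dv + 2%:R * mu * u1x in
  let s22 := lam * dv + 2%:R * mu * u2y in
  let s12 := mu * (u1y + u2x) in
  (s11 * nb.1 + s12 * nb.2, s12 * nb.1 + s22 * nb.2).

(* a piecewise function: u true = u^+ on T^+, u false = u^- on T^- *)
Definition pwfun := bool -> vpoly.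

Definition pw_eval (D nb : pt) (u : pwfun) (X : pt) : pt :=
  vev (u (0 <= side D nb X)) X.

Definition is_IFE (e : element) (lam mu : bool -> R) (D E F nb : pt)
  (u : pwfun) : Prop :=
  [/\ forall s, inPi e (u s).1 /\ inPi e (u s).2,
      (* continuity across l (on l cap T, the segment DE) *)
      forall X, on_seg D E X -> vev (u true) X = vev (u false) X,
      top_coef_eq e (u true) (u false) &
      traction (lam true) (mu true) (u true) F nb
        = traction (lam false) (mu false) (u false) F nb].

Definition unisolvent (e : element) (lam mu : bool -> R) (D E F nb : pt) : Prop :=
  forall u v : pwfun, is_IFE e lam mu D E F nb u -> is_IFE e lam mu D E F nb v ->
    (forall j, pw_eval D nb u (nodes e j) = pw_eval D nb v (nodes e j)) ->
    forall X, inT e X -> pw_eval D nb u X = pw_eval D nb v X.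

(* phi c i  stands for the shape function phi_{i + c|I|, T}  (c = 0, 1) *)
Definition is_shape_family (e : element) (lam mu : bool -> R) (D E F nb : pt)
  (phi : 'I_2 -> 'I_(nnodes e) -> pwfun) : Prop :=
  forall c i, is_IFE e lam mu D E F nb (phi c i) /\
    forall j (r : 'I_2),
      pcomp (pw_eval D nb (phi c i) (nodes e j)) r = ((r == c) && (i == j))%:R.

(* (d Phi^s_i)(X) : the 2x2 matrix [d phi^s_i (X), d phi^s_{i+|I|} (X)],
   d a (formal) differential operator acting on scalar polynomials *)
Definition PhiM (e : element) (phi : 'I_2 -> 'I_(nnodes e) -> pwfun)
  (d : bpoly -> bpoly) (s : bool) (i : 'I_(nnodes e)) (X : pt) : 'M[R]_2 :=
  \matrix_(r < 2, c < 2) bev (d (vcomp (phi c i s) r)) X.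

(* Kronecker product v^T (x) B of a column 2-vector v (given as a point) and a
   2x2 matrix B: the 2x4 matrix [v_1 B, v_2 B] *)
Definition kron_pt (v : pt) (B : 'M[R]_2) : 'M[R]_(2, 4) :=
  row_mx (v.1 *: B) (v.2 *: B).

Definition psub (P Q : pt) : pt := (P.1 - Q.1, P.2 - Q.2).

Definition Nbar (lam mu : R) (nb : pt) : 'M[R]_4 :=
  let n1 := nb.1 in let n2 := nb.2 in
  let rows := [:: [:: (lam + 2%:R * mu) * n1; mu * n2; mu * n2; lam * n1];
                  [:: lam * n2; mu * n1; mu * n1; (lam + 2%:R * mu) * n2];
                  [:: - n2; 0; n1; 0];
                  [:: 0; - n2; 0; n1]] in
  \matrix_(i < 4, j < 4) nth 0 (nth [::] rows i) j.

Definition Mbar (lam mu : bool -> R) (nb : pt) (s : bool) : 'M[R]_4 :=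
  invmx (Nbar (lam (~~ s)) (mu (~~ s)) nb) *m Nbar (lam s) (mu s) nb.

Definition Ij (j : 'I_2) : 'M[R]_(2, 4) :=
  if val j == 0%N then row_mx 1%:M 0 else row_mx 0 1%:M.

Definition ident_lhs (e : element) (lam mu : bool -> R) (D nb X : pt)
  (Xb : 'I_(nnodes e) -> pt) (phi : 'I_2 -> 'I_(nnodes e) -> pwfun)
  (d : bpoly -> bpoly) (s : bool) : 'M[R]_(2, 4) :=
  \sum_(i < nnodes e) kron_pt (psub (nodes e i) X) (PhiM phi d s i X)
  + \sum_(i < nnodes e | onside D nb (~~ s) (nodes e i))
      (kron_pt (psub (nodes e i) (Xb i)) (PhiM phi d s i X)
         *m (Mbar lam mu nb s - 1%:M)).

End IFE.

Arguments is_shape_family {R} e lam mu D E F nb phi.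
Arguments ident_lhs {R} e lam mu D nb X Xb phi d s.
Arguments PhiM {R} e phi d s i X.

From Pilot Require Import Defs.
From HB Require Import structures.
From mathcomp Require Import all_boot all_order all_algebra.
From mathcomp Require Import ring lra.
Import Order.TTheory GRing.Theory Num.Theory.
Local Open Scope ring_scope.

Set Implicit Arguments. Unset Strict Implicit. Unset Printing Implicit Defensive.

(* Fix s and g in R^4, read as a vectorised 2x2 gradient.  The field equal to
   Y |-> ((Y - X)^T (x) I) g on T^s, and to that field plus
   ((Y - D)^T (x) I)(Mbar^s - I) g on T^s', is an IFE function: the correction
   vanishes on l because the tangential rows of Nbar do not depend on the Lame
   parameters, and the tractions at F agree because Nbar^s' Mbar^s = Nbar^s.
   By unisolvence it equals its nodal interpolant sum_i Phi_i (value at A_i),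
   and on T^s the two pieces are quadratic polynomials agreeing on six points
   in general position, hence equal.  The nodal values are the matrices of the
   statement applied to g (Xbar_i may replace D as the correction vanishes on
   l), so applying id, d_j and d_j d_k at X yields the three identities
   applied to g, for every g. *)

Lemma big_ord4 (V : nmodType) (F : 'I_4 -> V) :
  \sum_(k < 4) F k = F (inord 0) + F (inord 1) + F (inord 2) + F (inord 3).
Proof.
rewrite !big_ord_recr big_ord0 /= add0r.
by congr (F _ + F _ + F _ + F _); apply: val_inj; rewrite /= inordK.
Qed.

Lemma ord2P (r : 'I_2) : r = inord 0 \/ r = inord 1.
Proof.
case: r => [[|[|n]] Hr]; [left|right|done]; apply: val_inj; by rewrite /= inordK.
Qed.

Lemma row_mx_inord (T : Type) (m : nat) (A B : 'M[T]_(m, 2)) (c : 'I_m) (k : 'I_4) :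
  (row_mx A B : 'M_(m, 4)) c k =
  if (k < 2)%N then A c (inord k) else B c (inord (k - 2)).
Proof.
rewrite mxE; case: splitP => j /= ->.
- by rewrite ltn_ord inord_val.
- by rewrite ltnNge leq_addr /= addKn inord_val.
Qed.

Section PolynomialAlgebra.
Variable R : realFieldType.
Implicit Types (p q : bpoly R) (u v : vpoly R) (X Y : pt R).

Definition badd p q :=
  BPoly (c0 p + c0 q) (cx p + cx q) (cy p + cy q)
        (cxx p + cxx q) (cxy p + cxy q) (cyy p + cyy q).
Definition bscale (a : R) p :=
  BPoly (a * c0 p) (a * cx p) (a * cy p) (a * cxx p) (a * cxy p) (a * cyy p).
Definition bzero : bpoly R := BPoly 0 0 0 0 0 0.

Lemma bevD p q X : bev (badd p q) X = bev p X + bev q X.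
Proof. rewrite /bev /=; ring. Qed.
Lemma bevZ a p X : bev (bscale a p) X = a * bev p X.
Proof. rewrite /bev /=; ring. Qed.
Lemma bev0 X : bev bzero X = 0.
Proof. rewrite /bev /=; ring. Qed.

Definition bpoly_linear (d : bpoly R -> bpoly R) :=
  [/\ forall p q, d (badd p q) = badd (d p) (d q),
      forall a p, d (bscale a p) = bscale a (d p) & d bzero = bzero].

Lemma bpoly_linear_id : bpoly_linear id. Proof. by []. Qed.

Lemma bpoly_linear_bd j : bpoly_linear (bd j).
Proof.
rewrite /bd; case: (val j == 0%N); split => [p q|a p|];
  rewrite /bdx /bdy /badd /bscale /bzero /=; congr BPoly; ring.
Qed.

Lemma bpoly_linear_comp d1 d2 :
  bpoly_linear d1 -> bpoly_linear d2 -> bpoly_linear (fun p => d1 (d2 p)).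
Proof.
by move=> [h1 h2 h3] [k1 k2 k3]; split => [p q|a p|]; rewrite ?k1 ?k2 ?k3 ?h1 ?h2 ?h3.
Qed.

Definition vadd u v : vpoly R := (badd u.1 v.1, badd u.2 v.2).
Definition vscale (a : R) u : vpoly R := (bscale a u.1, bscale a u.2).
Definition padd (u v : pwfun R) : pwfun R := fun b => vadd (u b) (v b).
Definition pscale (a : R) (u : pwfun R) : pwfun R := fun b => vscale a (u b).
Definition pzero : pwfun R := fun _ => (bzero, bzero).

Lemma vcompD u v r : vcomp (vadd u v) r = badd (vcomp u r) (vcomp v r).
Proof. by rewrite /vcomp; case: ifP. Qed.

Lemma vcompZ a u r : vcomp (vscale a u) r = bscale a (vcomp u r).
Proof. by rewrite /vcomp; case: ifP. Qed.

Lemma vcomp_pzero b r : vcomp (pzero b) r = bzero.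
Proof. by rewrite /vcomp; case: ifP. Qed.

Lemma pcomp_vev u Y r : Defs.pcomp (vev u Y) r = bev (vcomp u r) Y.
Proof. by rewrite /Defs.pcomp /vcomp; case: ifP. Qed.

Lemma pt_eq_pcomp (P Q : pt R) : (forall r, Defs.pcomp P r = Defs.pcomp Q r) -> P = Q.
Proof.
move=> H; have := H (inord 0); have := H (inord 1); rewrite /Defs.pcomp /= !inordK //=.
by case: P Q {H} => [p1 p2] [q1 q2] /= -> ->.
Qed.

Lemma inPiD (e : element R) p q : inPi e p -> inPi e q -> inPi e (badd p q).
Proof.
case: e => [? ? ?|? ? ?|? ? ?] /=.
- by move=> [-> -> ->] [-> -> ->]; split; rewrite /= addr0.
- by move=> [-> ->] [-> ->]; split; rewrite /= addr0.
- by move=> [-> ->] [-> ->]; split; rewrite /= ?addr0 ?opprD.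
Qed.

Lemma inPiZ (e : element R) a p : inPi e p -> inPi e (bscale a p).
Proof.
case: e => [? ? ?|? ? ?|? ? ?] /=.
- by move=> [-> -> ->]; split; rewrite /= mulr0.
- by move=> [-> ->]; split; rewrite /= mulr0.
- by move=> [-> ->]; split; rewrite /= ?mulr0 ?mulrN.
Qed.

Lemma inPi_affine (e : element R) p :
  cxx p = 0 -> cxy p = 0 -> cyy p = 0 -> inPi e p.
Proof. by move=> h1 h2 h3; case: e => * /=; rewrite h1 ?h2 h3 ?oppr0. Qed.

Lemma tractionD (lam mu : R) u v (F nb : pt R) :
  traction lam mu (vadd u v) F nb =
  ((traction lam mu u F nb).1 + (traction lam mu v F nb).1,
   (traction lam mu u F nb).2 + (traction lam mu v F nb).2).
Proof. rewrite /traction /bev /=; congr pair; ring. Qed.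

Lemma tractionZ (lam mu : R) a u (F nb : pt R) :
  traction lam mu (vscale a u) F nb =
  (a * (traction lam mu u F nb).1, a * (traction lam mu u F nb).2).
Proof. rewrite /traction /bev /=; congr pair; ring. Qed.

Section IFESpace.
Variables (e : element R) (lam mu : bool -> R) (D E F nb : pt R).
Local Notation IFE := (is_IFE e lam mu D E F nb).

Lemma is_IFE0 : IFE pzero.
Proof.
split.
- by move=> b; split; apply: inPi_affine.
- by [].
- by case: e.
- rewrite /traction /bev /=; congr pair; ring.
Qed.

Lemma is_IFED (u v : pwfun R) : IFE u -> IFE v -> IFE (padd u v).
Proof.
move=> [hu1 hu2 hu3 hu4] [hv1 hv2 hv3 hv4]; split.
- by move=> b; have [? ?] := hu1 b; have [? ?] := hv1 b; split; apply: inPiD.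
- move=> Y hY; move: (hu2 Y hY) (hv2 Y hY); rewrite /vev /= !bevD.
  by case=> -> -> [-> ->].
- by move: hu3 hv3; rewrite /padd; case: e => //= ? ? ? [-> ->] [-> ->].
- by rewrite /padd !tractionD hu4 hv4.
Qed.

Lemma is_IFEZ a (u : pwfun R) : IFE u -> IFE (pscale a u).
Proof.
move=> [hu1 hu2 hu3 hu4]; split.
- by move=> b; have [? ?] := hu1 b; split; apply: inPiZ.
- by move=> Y hY; move: (hu2 Y hY); rewrite /vev /= !bevZ => -[-> ->].
- by move: hu3; rewrite /pscale; case: e => //= ? ? ? [-> ->].
- by rewrite /pscale !tractionZ hu4.
Qed.

End IFESpace.
End PolynomialAlgebra.

Section PlaneGeometry.
Variable R : realFieldType.
Implicit Types (P Q S V W X Y D nb v w : pt R).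

Definition dotp v w : R := v.1 * w.1 + v.2 * w.2.
Definition tangent nb : pt R := (- nb.2, nb.1).
Definition det2 v w : R := v.1 * w.2 - v.2 * w.1.
Definition ptZ (c : R) v : pt R := (c * v.1, c * v.2).
Definition affc P V W (a b : R) : pt R :=
  (P.1 + a * V.1 + b * W.1, P.2 + a * V.2 + b * W.2).

Lemma perp_unit_normal nb w : dotp nb nb = 1 -> dotp w nb = 0 ->
  w = ptZ (dotp w (tangent nb)) (tangent nb).
Proof.
case: w => w1 w2; rewrite /ptZ /tangent /dotp /= => hn hw; congr pair.
- by transitivity (w1 * (nb.1 * nb.1 + nb.2 * nb.2) - nb.1 * (w1 * nb.1 + w2 * nb.2));
    [rewrite hn hw; ring | ring].
- by transitivity (w2 * (nb.1 * nb.1 + nb.2 * nb.2) - nb.2 * (w1 * nb.1 + w2 * nb.2));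
    [rewrite hn hw; ring | ring].
Qed.

Section Line.
Variables (D E nb : pt R).
Hypotheses (nb_unit : dotp nb nb = 1) (E_on_l : side D nb E = 0).

Lemma det2_line w : det2 (psub E D) w = - dotp (psub E D) (tangent nb) * dotp w nb.
Proof. rewrite {1}(perp_unit_normal (w := psub E D) nb_unit E_on_l) /det2 /dotp /=; ring. Qed.

Lemma tangent_coord_neq0 : D <> E -> dotp (psub E D) (tangent nb) != 0.
Proof.
move=> DneE; apply/eqP => t0; apply: DneE.
move: (perp_unit_normal (w := psub E D) nb_unit E_on_l); rewrite t0 /ptZ !mul0r.
case=> /eqP + /eqP; rewrite !subr_eq0 => /eqP h1 /eqP h2.
by case: D E h1 h2 => ? ? [? ?] /= -> ->.
Qed.

End Line.

Lemma onsideE D nb Y b : onside D nb b Y = ((0 <= side D nb Y) == b).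
Proof. by rewrite /onside; case: b; rewrite ?eqb_id // eqbF_neg ltNge. Qed.

Lemma side_affc D nb P Q S a b :
  side D nb (affc P (psub Q P) (psub S P) a b)
  = (1 - a - b) * side D nb P + a * side D nb Q + b * side D nb S.
Proof. rewrite /side /=; ring. Qed.

Lemma interval_affc (lo hi x y z a b : R) :
  lo <= x <= hi -> lo <= y <= hi -> lo <= z <= hi ->
  0 <= a -> 0 <= b -> a + b <= 1 -> lo <= x + a * (y - x) + b * (z - x) <= hi.
Proof. by move=> /andP[? ?] /andP[? ?] /andP[? ?] *; apply/andP; split; nra. Qed.

Lemma inT_affc (e : element R) P Q S a b :
  inT e P -> inT e Q -> inT e S -> 0 <= a -> 0 <= b -> a + b <= 1 ->
  inT e (affc P (psub Q P) (psub S P) a b).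
Proof.
move=> + + + a0 b0 ab1; have c0 : 0 <= 1 - a - b by lra.
case: e => [P1 P2 P3|lo1 lo2 h|lo1 lo2 h] /=; last 2 first.
- by move=> [? ?] [? ?] [? ?]; split; apply: interval_affc.
- by move=> [? ?] [? ?] [? ?]; split; apply: interval_affc.
move=> [t1 [t2 [t3 [? ? ? ht ->]]]] [u1 [u2 [u3 [? ? ? hu ->]]]]
       [w1 [w2 [w3 [? ? ? hw ->]]]] /=.
exists ((1 - a - b) * t1 + a * u1 + b * w1), ((1 - a - b) * t2 + a * u2 + b * w2),
       ((1 - a - b) * t3 + a * u3 + b * w3).
split; try by rewrite !addr_ge0 ?mulr_ge0.
- transitivity ((1 - a - b) * (t1 + t2 + t3) + a * (u1 + u2 + u3) + b * (w1 + w2 + w3)).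
    ring.
  by rewrite ht hu hw; ring.
- rewrite /affc /psub /=; congr pair; ring.
Qed.

Lemma onBdT_inT (e : element R) X : onBdT e X -> inT e X.
Proof.
case: e => [P1 P2 P3|? ? ?|? ? ?] /=; [|by case|by case].
move=> [[t [/andP[t0 t1] ->]] | [[t [/andP[t0 t1] ->]] | [t [/andP[t0 t1] ->]]]].
- exists (1 - t), t, 0; split => //; [by rewrite subr_ge0 | ring | congr pair; ring].
- exists 0, (1 - t), t; split => //; [by rewrite subr_ge0 | ring | congr pair; ring].
- exists t, 0, (1 - t); split => //; [by rewrite subr_ge0 | ring | congr pair; ring].
Qed.

Lemma lincomb6_eq0 (x F1 F2 F3 F4 F5 F6 c1 c2 c3 c4 c5 c6 : R) :
  F1 = 0 -> F2 = 0 -> F3 = 0 -> F4 = 0 -> F5 = 0 -> F6 = 0 ->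
  x = c1 * F1 + c2 * F2 + c3 * F3 + c4 * F4 + c5 * F5 + c6 * F6 -> x = 0.
Proof. by move=> -> -> -> -> -> -> ->; rewrite !mulr0 !addr0. Qed.

Lemma mulf_subr_eq0 (k x y : R) : k != 0 -> k * (x - y) = 0 -> x = y.
Proof. by move=> hk /eqP; rewrite mulf_eq0 (negbTE hk) /= subr_eq0 => /eqP. Qed.

(* The multipliers below are the second (resp. first) finite differences of the
   six values along V and W, composed with the inverse of the change of
   variables (a, b) |-> P + a V + b W; they recover each coefficient of p - q
   times (det2 V W)^2, 2 (det2 V W)^2 or det2 V W. *)
Lemma bpoly_eq_on_lattice (p q : bpoly R) P V W : det2 V W != 0 ->
  (forall a b : nat, (a + b <= 2)%N ->
     bev p (affc P V W a%:R b%:R) = bev q (affc P V W a%:R b%:R)) -> p = q.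
Proof.
move=> hd H.
have f a b : (a + b <= 2)%N -> bev p (affc P V W a%:R b%:R) - bev q (affc P V W a%:R b%:R) = 0.
  by move=> hab; rewrite H // subrr.
have f00 := f 0%N 0%N isT; have f10 := f 1%N 0%N isT; have f20 := f 2%N 0%N isT.
have f01 := f 0%N 1%N isT; have f02 := f 0%N 2%N isT; have f11 := f 1%N 1%N isT.
move: f00 f10 f20 f01 f02 f11 {H f}.
case: p => p0 p1 p2 p3 p4 p5; case: q => q0 q1 q2 q3 q4 q5.
case: P => P1 P2; case: V hd => V1 V2; case: W => W1 W2; rewrite /det2 /bev /affc /= => hd.
move=> f00 f10 f20 f01 f02 f11.
have hk : 2%:R * (V1 * W2 - V2 * W1) ^+ 2 != 0 by rewrite mulf_neq0 ?pnatr_eq0 // expf_neq0.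
have e3 : q3 = p3.
  apply/esym/(mulf_subr_eq0 hk)/(lincomb6_eq0 f00 f10 f20 f01 f02 f11
     (c1 := W2^+2 - 2%:R * V2 * W2 + V2^+2) (c2 := -2%:R * W2^+2 + 2%:R * V2 * W2)
     (c3 := W2^+2) (c4 := 2%:R * V2 * W2 - 2%:R * V2^+2) (c5 := V2^+2)
     (c6 := - 2%:R * V2 * W2)); ring.
have e5 : q5 = p5.
  apply/esym/(mulf_subr_eq0 hk)/(lincomb6_eq0 f00 f10 f20 f01 f02 f11
     (c1 := W1^+2 - 2%:R * V1 * W1 + V1^+2) (c2 := -2%:R * W1^+2 + 2%:R * V1 * W1)
     (c3 := W1^+2) (c4 := 2%:R * V1 * W1 - 2%:R * V1^+2) (c5 := V1^+2)
     (c6 := - 2%:R * V1 * W1)); ring.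
have e4 : q4 = p4.
  apply/esym/(mulf_subr_eq0 hk)/(lincomb6_eq0 f00 f10 f20 f01 f02 f11
     (c1 := -2%:R * W1 * W2 + 2%:R * (V1 * W2 + V2 * W1) - 2%:R * V1 * V2)
     (c2 := 4%:R * W1 * W2 - 2%:R * (V1 * W2 + V2 * W1)) (c3 := -2%:R * W1 * W2)
     (c4 := -2%:R * (V1 * W2 + V2 * W1) + 4%:R * V1 * V2) (c5 := -2%:R * V1 * V2)
     (c6 := 2%:R * (V1 * W2 + V2 * W1))); ring.
subst q3 q4 q5.
have e1 : q1 = p1.
  apply/esym/(mulf_subr_eq0 hd)/(lincomb6_eq0 f00 f10 f20 f01 f02 f11
     (c1 := V2 - W2) (c2 := W2) (c3 := 0) (c4 := - V2) (c5 := 0) (c6 := 0)); ring.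
have e2 : q2 = p2.
  apply/esym/(mulf_subr_eq0 hd)/(lincomb6_eq0 f00 f10 f20 f01 f02 f11
     (c1 := W1 - V1) (c2 := - W1) (c3 := 0) (c4 := V1) (c5 := 0) (c6 := 0)); ring.
subst q1 q2; suff -> : q0 = p0 by [].
apply/esym/(mulf_subr_eq0 (oner_neq0 R))/(lincomb6_eq0 f00 f10 f20 f01 f02 f11
   (c1 := 1) (c2 := 0) (c3 := 0) (c4 := 0) (c5 := 0) (c6 := 0)); ring.
Qed.

End PlaneGeometry.

Section IFEPieces.
Variables (R : realFieldType) (e : element R) (D nb : pt R) (u v : pwfun R).
Hypothesis agree_on_T : forall Y, inT e Y -> pw_eval D nb u Y = pw_eval D nb v Y.

Lemma piece_eq_of_triangle (s : bool) (P Q S : pt R) (k : R) :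
  inT e P -> inT e Q -> inT e S -> det2 (psub Q P) (psub S P) != 0 -> 2%:R <= k ->
  (forall a b : nat, (a + b <= 2)%N ->
     (0 <= side D nb (affc P (psub Q P) (psub S P) (a%:R / k) (b%:R / k))) = s) ->
  u s = v s.
Proof.
move=> hP hQ hS hdet hk hside.
have k_gt0 : 0 < k by apply: lt_le_trans hk; rewrite ltr0n.
pose V := ptZ k^-1 (psub Q P); pose W := ptZ k^-1 (psub S P).
have hVW : det2 V W != 0.
  have -> : det2 V W = k^-1 ^+ 2 * det2 (psub Q P) (psub S P) by rewrite /det2 /=; ring.
  by rewrite mulf_neq0 // expf_neq0 // invr_eq0 lt0r_neq0.
have agree_lattice a b : (a + b <= 2)%N ->
    vev (u s) (affc P V W a%:R b%:R) = vev (v s) (affc P V W a%:R b%:R).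
  move=> hab.
  have -> : affc P V W a%:R b%:R = affc P (psub Q P) (psub S P) (a%:R / k) (b%:R / k).
    by rewrite /affc /V /W /ptZ /=; congr pair; ring.
  have hin : inT e (affc P (psub Q P) (psub S P) (a%:R / k) (b%:R / k)).
    apply: inT_affc; rewrite ?divr_ge0 ?ler0n ?(ltW k_gt0) //.
    by rewrite -mulrDl ler_pdivrMr // mul1r -natrD (le_trans _ hk) // ler_nat.
  by move: (agree_on_T hin); rewrite /pw_eval hside.
rewrite [u s]surjective_pairing [v s]surjective_pairing.
congr pair; apply: (bpoly_eq_on_lattice (P := P) hVW) => a b hab;
  by have /pair_equal_spec[] := agree_lattice a b hab.
Qed.

(* T^+ contains the triangle D E Yp, whose lattice points of mesh 1/2 lie in the
   closed half-plane; T^- contains the triangle Zm D E, whose lattice points of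
   mesh 1/4 stay off l. *)
Lemma pieces_eq (E Yp Zm : pt R) (s : bool) :
  onBdT e D -> onBdT e E -> D <> E -> side D nb E = 0 -> dotp nb nb = 1 ->
  inT e Yp -> inT e Zm -> 0 < side D nb Yp -> side D nb Zm < 0 -> u s = v s.
Proof.
move=> hD hE DneE hsE hn hYp hZm sYp sZm.
have t_neq0 := tangent_coord_neq0 hn hsE DneE.
have sD : side D nb D = 0 by rewrite /side !subrr !mul0r addr0.
case: s.
- apply: (piece_eq_of_triangle (onBdT_inT hD) (onBdT_inT hE) hYp (k := 2%:R)) => //.
    by rewrite (det2_line hn hsE) mulf_neq0 ?oppr_eq0 // lt0r_neq0.
  move=> a b _; rewrite side_affc sD hsE !mulr0 !add0r.
  by rewrite mulr_ge0 ?divr_ge0 ?ler0n ?(ltW sYp).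
- apply: (piece_eq_of_triangle hZm (onBdT_inT hD) (onBdT_inT hE) (k := 4%:R)).
  + have -> : det2 (psub D Zm) (psub E Zm) = det2 (psub E D) (psub Zm D).
      by rewrite /det2 /=; ring.
    by rewrite (det2_line hn hsE) mulf_neq0 ?oppr_eq0 // ltr0_neq0.
  + by rewrite ler_nat.
  + move=> a b hab; have : a%:R + b%:R <= 2%:R :> R by rewrite -natrD ler_nat.
    rewrite side_affc sD hsE !mulr0 !addr0 => hab'.
    by apply/negbTE; rewrite -ltNge pmulr_rlt0 //; lra.
Qed.

End IFEPieces.

Section ElasticityMatrices.
Variable R : realFieldType.
Implicit Types (lam mu : R) (nb w : pt R) (u : vpoly R).

Lemma kron_pt_mulmx (v : pt R) (B : 'M[R]_2) : kron_pt v B = B *m kron_pt v 1%:M.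
Proof. by rewrite /kron_pt (@mul_mx_row _ 2 2 2 2) -!scalemxAr !mulmx1. Qed.

Lemma kron_ptD (v w : pt R) (B : 'M[R]_2) :
  kron_pt v B + kron_pt w B = kron_pt (v.1 + w.1, v.2 + w.2) B.
Proof. by rewrite /kron_pt (@add_row_mx _ 2 2 2) -!scalerDl. Qed.

Lemma kron_ptZ (c : R) (v : pt R) (B : 'M[R]_2) : kron_pt (ptZ c v) B = c *: kron_pt v B.
Proof. by rewrite /kron_pt (@scale_row_mx _ 2 2 2) !scalerA. Qed.

Lemma kron_pt1_mulmxE (v : pt R) (g : 'cV[R]_4) (r : 'I_2) :
  (kron_pt v 1%:M *m g) r 0 = v.1 * g (inord r) 0 + v.2 * g (inord (2 + r)) 0.
Proof.
rewrite mxE big_ord4 !row_mx_inord !inordK //= !mxE.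
by have [->|->] := ord2P r; rewrite -!val_eqE /= !inordK //=; ring.
Qed.

(* A left inverse of Nbar: with t the tangent, a gradient G is recovered from
   b = G t (rows 3-4) and a = sigma(G) n (rows 1-2) through
   n.(G n) = (a.n - lam b.t) / (lam + 2 mu) and t.(G n) = a.t / mu - b.n;
   the powers of nu normalise a normal of arbitrary length. *)
Definition Nbar_inv lam mu nb : 'M[R]_4 :=
  let n1 := nb.1 in let n2 := nb.2 in let L := lam + 2%:R * mu in
  let nu := n1 ^+ 2 + n2 ^+ 2 in
  let al := [:: n1 / L; n2 / L; lam * n2 / L; - (lam * n1) / L] in
  let be := [:: - n2 / mu; n1 / mu; - n1; - n2] in
  let g1 := [:: 0; 0; 1; 0] in let g2 := [:: 0; 0; 0; 1] in
  \matrix_(i < 4, j < 4)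
   let a := nth 0 al j in let b := nth 0 be j in
   nth 0 [:: (a * n1 ^+ 2 - b * n1 * n2) / nu ^+ 2 - nth 0 g1 j * n2 / nu;
             (a * n1 * n2 + b * n1 ^+ 2) / nu ^+ 2 - nth 0 g2 j * n2 / nu;
             (a * n1 * n2 - b * n2 ^+ 2) / nu ^+ 2 + nth 0 g1 j * n1 / nu;
             (a * n2 ^+ 2 + b * n1 * n2) / nu ^+ 2 + nth 0 g2 j * n1 / nu] i.

Section LamePositive.
Variables (lam mu : R) (nb : pt R).
Hypotheses (lam_gt0 : 0 < lam) (mu_gt0 : 0 < mu) (nb_neq0 : nb.1 ^+ 2 + nb.2 ^+ 2 != 0).

Lemma Nbar_invK : Nbar_inv lam mu nb *m Nbar lam mu nb = 1%:M.
Proof.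
have hL : lam + 2%:R * mu != 0 by rewrite lt0r_neq0 // addr_gt0 ?mulr_gt0.
have hmu : mu != 0 by rewrite lt0r_neq0.
apply/matrixP => i j; rewrite !mxE big_ord4 !mxE !inordK //.
by case: i => [[|[|[|[|i]]]] Hi] //; case: j => [[|[|[|[|j]]]] Hj] //=;
  field; apply/and3P.
Qed.

Lemma Nbar_unit : Nbar lam mu nb \in unitmx.
Proof. by case: (mulmx1_unit Nbar_invK). Qed.

End LamePositive.

Lemma tangential_rows_Nbar lam mu nb :
  (row_mx (0 : 'M_2) 1%:M : 'M_(2, 4)) *m Nbar lam mu nb = kron_pt (tangent nb) 1%:M.
Proof.
apply/matrixP => r k; rewrite mxE big_ord4 !row_mx_inord !inordK //= !mxE !inordK //.
have [->|->] := ord2P r; case: k => [[|[|[|[|k]]]] Hk] //=;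
  by rewrite ?inordK //= -!val_eqE /= !inordK //=; ring.
Qed.

Definition gradv u (X : pt R) : 'cV[R]_4 :=
  \col_(k < 4) nth 0 [:: bev (bdx u.1) X; bev (bdx u.2) X; bev (bdy u.1) X;
                         bev (bdy u.2) X] k.

Lemma traction_gradv lam mu u (F : pt R) nb :
  traction lam mu u F nb =
  ((Nbar lam mu nb *m gradv u F) (inord 0) 0, (Nbar lam mu nb *m gradv u F) (inord 1) 0).
Proof. by rewrite /traction !mxE !big_ord4 !mxE !inordK //=; congr pair; ring. Qed.

Lemma gradvD u v (X : pt R) : gradv (vadd u v) X = gradv u X + gradv v X.
Proof.
apply/matrixP => k c; rewrite !mxE.
by case: k => [[|[|[|[|k]]]] Hk] //=; rewrite /bev /=; ring.
Qed.

Section Transmission.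
Variables (lam mu : bool -> R) (nb : pt R) (s : bool).
Hypotheses (lam_gt0 : forall b, 0 < lam b) (mu_gt0 : forall b, 0 < mu b)
  (nb_unit : dotp nb nb = 1).

Let Nbar_unit_at b : Nbar (lam b) (mu b) nb \in unitmx.
Proof.
by apply: Nbar_unit; rewrite // !expr2 -[_ + _]/(dotp nb nb) nb_unit oner_neq0.
Qed.

Lemma Nbar_Mbar : Nbar (lam (~~ s)) (mu (~~ s)) nb *m Mbar lam mu nb s = Nbar (lam s) (mu s) nb.
Proof. by rewrite /Mbar mulmxA mulmxV ?mul1mx. Qed.

(* For w along l, kron_pt w 1 is a multiple of the tangential rows of Nbar,
   which do not depend on the Lame parameters. *)
Lemma kron_tangent_Mbar w : dotp w nb = 0 -> kron_pt w 1%:M *m (Mbar lam mu nb s - 1%:M) = 0.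
Proof.
move=> w_perp; rewrite (perp_unit_normal nb_unit w_perp) kron_ptZ.
rewrite -(tangential_rows_Nbar (lam (~~ s)) (mu (~~ s))) -scalemxAl -!mulmxA.
rewrite mulmxBr mulmxA mulmxV // mul1mx mulmx1.
by rewrite mulmxBr !tangential_rows_Nbar subrr scaler0.
Qed.

End Transmission.
End ElasticityMatrices.

Section LinearFields.
Variable R : realFieldType.
Implicit Types (P X Y : pt R) (g : 'cV[R]_4).

Definition lin2 P (a b : R) : bpoly R := BPoly (- (P.1 * a + P.2 * b)) a b 0 0 0.

Definition linfield P g : vpoly R :=
  (lin2 P (g (inord 0) 0) (g (inord 2) 0), lin2 P (g (inord 1) 0) (g (inord 3) 0)).

Lemma linfieldE P g Y r :
  bev (vcomp (linfield P g) r) Y = (kron_pt (psub Y P) 1%:M *m g) r 0.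
Proof.
rewrite kron_pt1_mulmxE.
by have [->|->] := ord2P r; rewrite /vcomp /= !inordK //= /bev /=; ring.
Qed.

Lemma linfield_at_base X g r : bev (vcomp (linfield X g) r) X = 0.
Proof. by rewrite linfieldE kron_pt1_mulmxE /psub !subrr !mul0r addr0. Qed.

Lemma gradv_linfield P g Y : gradv (linfield P g) Y = g.
Proof.
apply/matrixP => k c; rewrite ord1 !mxE.
case: k => [[|[|[|[|k]]]] Hk] //=; rewrite /bev /= !(mulr0, mul0r, addr0);
  by congr (g _ _); apply: val_inj; rewrite /= inordK.
Qed.

Lemma Ij_mulmxE X g j r : (Ij R j *m g) r 0 = bev (bd j (vcomp (linfield X g) r)) X.
Proof.
have [->|->] := ord2P j; have [->|->] := ord2P r;
  rewrite /Ij /bd /vcomp /= !inordK //= mxE big_ord4 !row_mx_inord !inordK //= !mxE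
    ?inordK //= -?val_eqE /= ?inordK //= /bev /=; ring.
Qed.

Lemma bd_bd_linfield X g j k r : bev (bd j (bd k (vcomp (linfield X g) r))) X = 0.
Proof.
have [->|->] := ord2P j; have [->|->] := ord2P k; have [->|->] := ord2P r;
  rewrite /bd /vcomp /= !inordK //= /bev /=; ring.
Qed.

End LinearFields.

Section BrokenField.
Variables (R : realFieldType) (lam mu : bool -> R) (D nb X : pt R) (s : bool) (g : 'cV[R]_4).
Hypotheses (lam_gt0 : forall b, 0 < lam b) (mu_gt0 : forall b, 0 < mu b)
  (nb_unit : dotp nb nb = 1).

(* The correction on T^s' vanishes on l and makes the tractions of the two
   pieces agree at F. *)
Definition broken_field : pwfun R := fun b =>
  if b == s then linfield X g
  else vadd (linfield X g) (linfield D ((Mbar lam mu nb s - 1%:M) *m g)).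

Lemma broken_field_IFE (e : element R) (E F : pt R) :
  side D nb E = 0 -> is_IFE e lam mu D E F nb broken_field.
Proof.
move=> E_on_l; split.
- move=> b; rewrite /broken_field; case: (b == s);
    by split; apply: inPi_affine; rewrite /= ?addr0.
- move=> Y [t [_ ->]].
  have Y_on_l : dotp (psub (D.1 + t * (E.1 - D.1), D.2 + t * (E.2 - D.2)) D) nb = 0.
    by transitivity (t * side D nb E); [rewrite /dotp /side /=; ring | rewrite E_on_l mulr0].
  have corr0 r : bev (vcomp (linfield D ((Mbar lam mu nb s - 1%:M) *m g)) r)
                   (D.1 + t * (E.1 - D.1), D.2 + t * (E.2 - D.2)) = 0.
    by rewrite linfieldE mulmxA kron_tangent_Mbar // mul0mx mxE.
  have [c1 c2] := (corr0 (inord 0), corr0 (inord 1)).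
  rewrite /vcomp /= !inordK //= in c1 c2.
  by rewrite /broken_field; case: (true == s); case: (false == s);
    rewrite /vev /vadd /= ?bevD ?c1 ?c2 ?addr0.
- case: e => //= *; rewrite /broken_field;
    by case: (true == s); case: (false == s); rewrite /= ?addr0.
- have trac b : traction (lam b) (mu b) (broken_field b) F nb =
      ((Nbar (lam s) (mu s) nb *m g) (inord 0) 0, (Nbar (lam s) (mu s) nb *m g) (inord 1) 0).
    rewrite traction_gradv /broken_field; case: eqP => [->|/eqP b_neq_s].
      by rewrite gradv_linfield.
    have -> : b = ~~ s by move: b_neq_s; case: b; case: s.
    rewrite gradvD !gradv_linfield mulmxBl mul1mx addrC subrK mulmxA Nbar_Mbar //.
  by rewrite !trac.
Qed.

Lemma broken_field_nodal (A Xb : pt R) c : side D nb Xb = 0 ->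
  Defs.pcomp (pw_eval D nb broken_field A) c =
  ((kron_pt (psub A X) 1%:M + (if onside D nb (~~ s) A then
      kron_pt (psub A Xb) 1%:M *m (Mbar lam mu nb s - 1%:M) else 0)) *m g) c 0.
Proof.
move=> Xb_on_l; rewrite /pw_eval /broken_field onsideE pcomp_vev.
case A_side: ((0 <= side D nb A) == s).
  have -> : ((0 <= side D nb A) == ~~ s) = false by move: A_side; case: (0 <= _); case: s.
  by rewrite addr0 linfieldE.
have -> : (0 <= side D nb A) == ~~ s by move: A_side; case: (0 <= _); case: s.
rewrite vcompD bevD !linfieldE (mulmxDl (kron_pt (psub A X) 1%:M)) [RHS]mxE.
congr (_ + _).
have -> : psub A D = ((psub A Xb).1 + (psub Xb D).1, (psub A Xb).2 + (psub Xb D).2).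
  by rewrite /psub /=; congr pair; ring.
rewrite -kron_ptD mulmxA mulmxDl.
by rewrite (kron_tangent_Mbar s lam_gt0 mu_gt0 nb_unit (w := psub Xb D) Xb_on_l) addr0.
Qed.

End BrokenField.

Lemma eq_mx_on_cols (R : pzSemiRingType) m n (A B : 'M[R]_(m, n)) :
  (forall (g : 'cV[R]_n) r, (A *m g) r 0 = (B *m g) r 0) -> A = B.
Proof.
by move=> H; apply/matrixP => r k; have := H (delta_mx k 0) r; rewrite -!colE !mxE.
Qed.

Section PiecewiseSums.
Variable R : realFieldType.
Implicit Types (D nb Y : pt R) (u : pwfun R).

Lemma pw_eval_sum D nb Y r (I : finType) (F : I -> pwfun R) :
  Defs.pcomp (pw_eval D nb (\big[@padd R/pzero R]_(i : I) F i) Y) r =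
  \sum_(i : I) Defs.pcomp (pw_eval D nb (F i) Y) r.
Proof.
apply: (big_morph (fun u => Defs.pcomp (pw_eval D nb u Y) r)) => [u v|];
  by rewrite /pw_eval !pcomp_vev ?vcomp_pzero ?bev0 // /padd vcompD bevD.
Qed.

Lemma pw_evalZ D nb Y r a u :
  Defs.pcomp (pw_eval D nb (pscale a u) Y) r = a * Defs.pcomp (pw_eval D nb u Y) r.
Proof. by rewrite /pw_eval !pcomp_vev /pscale vcompZ bevZ. Qed.

Section LinearOperator.
Variables (d : bpoly R -> bpoly R) (b : bool) (r : 'I_2) (X : pt R).
Hypothesis d_linear : bpoly_linear d.

Lemma bev_op_sum (I : finType) (F : I -> pwfun R) :
  bev (d (vcomp ((\big[@padd R/pzero R]_(i : I) F i) b) r)) X =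
  \sum_(i : I) bev (d (vcomp (F i b) r)) X.
Proof.
have [dD _ d0] := d_linear.
apply: (big_morph (fun u : pwfun R => bev (d (vcomp (u b) r)) X)) => [u v|];
  by rewrite ?vcomp_pzero ?d0 ?bev0 // /padd vcompD dD bevD.
Qed.

Lemma bev_opZ a u : bev (d (vcomp (pscale a u b) r)) X = a * bev (d (vcomp (u b) r)) X.
Proof. by have [_ dZ _] := d_linear; rewrite /pscale vcompZ dZ bevZ. Qed.

End LinearOperator.
End PiecewiseSums.

Section Interpolation.
Variables (R : realFieldType) (e : element R) (lam mu : bool -> R) (D E F nb : pt R)
  (phi : 'I_2 -> 'I_(nnodes e) -> pwfun R).
Hypothesis phi_shape : is_shape_family e lam mu D E F nb phi.

Definition interpolant (w : 'I_2 -> 'I_(nnodes e) -> R) : pwfun R :=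
  \big[@padd R/pzero R]_(i < nnodes e) \big[@padd R/pzero R]_(c < 2) pscale (w c i) (phi c i).

Lemma interpolant_IFE w : is_IFE e lam mu D E F nb (interpolant w).
Proof.
apply: big_ind => [|u v|i _]; [exact: is_IFE0 | exact: is_IFED|].
apply: big_ind => [|u v|c _]; [exact: is_IFE0 | exact: is_IFED|].
exact/is_IFEZ/(phi_shape c i).1.
Qed.

Lemma interpolant_nodal w j r :
  Defs.pcomp (pw_eval D nb (interpolant w) (@nodes _ e j)) r = w r j.
Proof.
rewrite pw_eval_sum (bigD1 j) //= big1 => [|i ij]; last first.
  by rewrite pw_eval_sum big1 // => c _; rewrite pw_evalZ (phi_shape c i).2 (negbTE ij) andbF mulr0.
rewrite pw_eval_sum (bigD1 r) //= big1 => [|c cr]; last first.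
  by rewrite pw_evalZ (phi_shape c j).2 eq_sym (negbTE cr) mulr0.
by rewrite pw_evalZ (phi_shape r j).2 !eqxx mulr1 !addr0.
Qed.

End Interpolation.

Lemma ident_lhs_decomp (R : realFieldType) (e : element R) (lam mu : bool -> R)
  (D nb X : pt R) (Xb : 'I_(nnodes e) -> pt R) (phi : 'I_2 -> 'I_(nnodes e) -> pwfun R) d s :
  ident_lhs e lam mu D nb X Xb phi d s =
  \sum_(i < nnodes e) PhiM e phi d s i X *m
    (kron_pt (psub (@nodes _ e i) X) 1%:M +
     (if onside D nb (~~ s) (@nodes _ e i) then
        kron_pt (psub (@nodes _ e i) (Xb i)) 1%:M *m (Mbar lam mu nb s - 1%:M) else 0)).
Proof.
rewrite /ident_lhs [X in _ + X = _]big_mkcond -big_split /=; apply: eq_bigr => i _.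
rewrite !(kron_pt_mulmx _ (PhiM _ _ _ _ _ _)) [RHS]mulmxDr.
by case: ifP => _; rewrite ?mulmxA ?mulmx0 ?addr0.
Qed.

Section Identities.
Variables (R : realFieldType) (e : element R) (lam mu : bool -> R) (D nb X : pt R)
  (Xb : 'I_(nnodes e) -> pt R) (phi : 'I_2 -> 'I_(nnodes e) -> pwfun R) (s : bool).
Hypotheses (lam_gt0 : forall b, 0 < lam b) (mu_gt0 : forall b, 0 < mu b)
  (nb_unit : dotp nb nb = 1) (Xb_on_l : forall i, side D nb (Xb i) = 0).

Let U g := broken_field lam mu D nb X s g.
Let nodal g c i := Defs.pcomp (pw_eval D nb (U g) (@nodes _ e i)) c.

Hypothesis interpolant_piece : forall g, interpolant phi (nodal g) s = U g s.

Lemma ident_lhs_mulmxE d g r : bpoly_linear d ->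
  (ident_lhs e lam mu D nb X Xb phi d s *m g) r 0 = bev (d (vcomp (linfield X g) r)) X.
Proof.
move=> d_linear; have -> : linfield X g = U g s by rewrite /U /broken_field eqxx.
rewrite -interpolant_piece bev_op_sum // ident_lhs_decomp mulmx_suml summxE.
apply: eq_bigr => i _; rewrite bev_op_sum // -mulmxA mxE; apply: eq_bigr => c _.
rewrite bev_opZ // mxE mulrC /nodal /U.
by rewrite (broken_field_nodal _ _ _ lam_gt0 mu_gt0 nb_unit _ _ (Xb_on_l i)).
Qed.

End Identities.

Unset Implicit Arguments. Set Strict Implicit.

Theorem mainTheorem15 (R : realFieldType) (e : element R)
  (lam mu : bool -> R) (D E F nb : pt R)
  (phi : 'I_2 -> 'I_(nnodes e) -> pwfun R) :
  valid_element e ->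
  (forall s, 0 < lam s) -> (forall s, 0 < mu s) ->
  onBdT e D -> onBdT e E -> D <> E ->
  side D nb E = 0 -> nb.1 ^+ 2 + nb.2 ^+ 2 = 1 ->
  (exists Y Z, [/\ inT e Y, inT e Z, 0 < side D nb Y & side D nb Z < 0]) ->
  side D nb F = 0 ->
  unisolvent e lam mu D E F nb ->
  is_shape_family e lam mu D E F nb phi ->
  forall (X : pt R) (Xb : 'I_(nnodes e) -> pt R) (s : bool),
    inT e X -> (forall i, side D nb (Xb i) = 0) ->
    [/\ ident_lhs e lam mu D nb X Xb phi id s = 0,
        forall j : 'I_2, ident_lhs e lam mu D nb X Xb phi (bd j) s = Ij R j &
        forall j k : 'I_2,
          ident_lhs e lam mu D nb X Xb phi (fun p => bd j (bd k p)) s = 0].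
Proof.
move=> _ lam_gt0 mu_gt0 hD hE DneE E_on_l nb_sq [Yp [Zm [hYp hZm sYp sZm]]] _
  unisolv phi_shape X Xb s _ Xb_on_l.
have nb_unit : dotp nb nb = 1 by rewrite /dotp -!expr2.
pose U g := broken_field lam mu D nb X s g.
pose nodal g c i := Defs.pcomp (pw_eval D nb (U g) (@nodes _ e i)) c.
have interpolant_piece g : interpolant phi (nodal g) s = U g s.
  apply: (pieces_eq _ s hD hE DneE E_on_l nb_unit hYp hZm sYp sZm).
  apply: unisolv; [exact: interpolant_IFE | exact: broken_field_IFE | move=> j].
  by apply: pt_eq_pcomp => r; rewrite (interpolant_nodal phi_shape).
have lhsE := ident_lhs_mulmxE lam_gt0 mu_gt0 nb_unit Xb_on_l interpolant_piece.
split => [|j|j k]; apply: eq_mx_on_cols => g r.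
- by rewrite lhsE ?mul0mx ?mxE ?linfield_at_base //; exact: bpoly_linear_id.
- by rewrite lhsE -?Ij_mulmxE //; exact: bpoly_linear_bd.
- rewrite lhsE ?mul0mx ?mxE ?bd_bd_linfield //.
  by apply: bpoly_linear_comp; apply: bpoly_linear_bd.
Qed.
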